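(* Consider the weighted stochastic block model: there are $r$ latent communities labelled $1,\ldots,r$; each node $i$ is independently assigned a latent community $Z_i$ with $\mathbb{P}(Z_i=z)=p_z>0$ for $z=1,\ldots,r$; each unordered pair of distinct nodes $i\neq j$ carries a real-valued edge weight $X_{i,j}=X_{j,i}$, where, conditional on the community indicators, the edge weights are independent and $X_{i,j}$ has distribution function $F_{z_1,z_2}(x)=\mathbb{P}(X_{i,j}\le x\mid Z_i=z_1,Z_j=z_2)$. Let $F_z(x):=\sum_{z'=1}^r F_{z,z'}(x)\,p_{z'}=\mathbb{P}(X_{i,j}\le x\mid Z_i=z)$. Suppose that the functions $F_1,\ldots,F_r$ are linearly independent. Then the weighted stochastic block model, i.e. the number of communities $r$, the community distribution $\boldsymbol{p}=(p_1,\ldots,p_r)'$, and the conditional distributions $F_{z_1,z_2}$, $1\le z_1,z_2\le r$, is nonparametrically identified from the distribution of the edge weights, up to relabeling of the latent communities.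
   Context: ''Nonparametrically identified up to relabeling'' means that any two weighted stochastic block models satisfying the assumptions and inducing the same joint distribution of observed edge weights have the same $r$ and have $(\boldsymbol{p},\{F_{z_1,z_2}\})$ equal up to a single permutation of the community labels, with no parametric restrictions imposed on the $F_{z_1,z_2}$. *)

From HB Require Import structures.
From mathcomp Require Import all_boot all_order all_algebra.
From mathcomp Require Import all_classical all_reals topology normedtype.
Set Implicit Arguments. Unset Strict Implicit. Unset Printing Implicit Defensive.
Import Order.TTheory GRing.Theory Num.Theory numFieldNormedType.Exports.
Local Open Scope ring_scope.
Local Open Scope classical_set_scope.

Definition is_cdf (R : realType) (F : R -> R) : Prop :=
  (forall x y : R, x <= y -> F x <= F y) /\
  (forall x : R, F @ x^'+ --> F x) /\
  (F @ -oo --> (0 : R)) /\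
  (F @ +oo --> (1 : R)).

Definition wsbm (R : realType) (r : nat) (p : 'I_r -> R)
    (F : 'I_r -> 'I_r -> R -> R) : Prop :=
  (forall z, 0 < p z) /\
  (\sum_(z < r) p z = 1) /\
  (forall z1 z2, is_cdf (F z1 z2)) /\
  (forall z1 z2, F z1 z2 = F z2 z1).

Definition marg_cdf (R : realType) (r : nat) (p : 'I_r -> R)
    (F : 'I_r -> 'I_r -> R -> R) (z : 'I_r) (x : R) : R :=
  \sum_(z' < r) F z z' x * p z'.

Definition marg_lin_indep (R : realType) (r : nat) (p : 'I_r -> R)
    (F : 'I_r -> 'I_r -> R -> R) : Prop :=
  forall c : 'I_r -> R,
    (forall x : R, \sum_(z < r) c z * marg_cdf p F z x = 0) ->
    forall z, c z = 0.

(* Joint distribution function of the edge weights (X_ij)_{i<j} on n nodes: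
   P(X_ij <= x i j for all i < j)
     = sum_{z : [n] -> [r]} prod_i p_{z_i} prod_{i<j} F_{z_i,z_j}(x i j). *)
Definition edge_joint_cdf (R : realType) (r : nat) (p : 'I_r -> R)
    (F : 'I_r -> 'I_r -> R -> R) (n : nat) (x : 'I_n -> 'I_n -> R) : R :=
  \sum_(z : {ffun 'I_n -> 'I_r})
     ((\prod_(i < n) p (z i)) *
      \prod_(i < n) \prod_(j < n | (i < j)%N) F (z i) (z j) (x i j)).

(* Let f_z and g_w be the marginal distribution functions of two models with
   the same edge distribution.  Sending to +oo all but three thresholds of a
   four-node star, the joint distribution function of the edge weights tends
   to the third moment sum_z p_z f_z(x) f_z(y) f_z(u); further limits give the
   second and first moments, and a four-node path gives
   sum_(a,b) p_a p_b F_ab(e) f_a(x) f_b(y); so both models have the same such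
   moments.  Because the f_z are linearly independent, finitely many
   evaluation points carry a dual basis; contracting the second-moment
   identity with it puts each f_z in the span of the g_w, and contracting the
   third-moment identity twice shows that only one coordinate of f_z is
   nonzero, so f_z is a multiple of a single g_w, equal to it because both
   tend to 1.  The resulting matching of communities is injective both ways,
   hence a bijection, and linear independence then recovers the weights from
   the first moment and the F_ab from the path moment. *)

From HB Require Import structures.
From mathcomp Require Import all_boot all_order all_algebra.
From mathcomp Require Import all_classical all_reals topology normedtype.
From mathcomp Require Import ring.
Import Order.TTheory GRing.Theory Num.Theory numFieldNormedType.Exports.
Local Open Scope ring_scope.
Local Open Scope classical_set_scope.

Set Implicit Arguments. Unset Strict Implicit. Unset Printing Implicit Defensive.

Lemma sum_delta_mull (S : pzSemiRingType) (n : nat) (z : 'I_n) (h : 'I_n -> S) :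
  \sum_(y < n) (z == y)%:R * h y = h z.
Proof.
rewrite (bigD1 z) //= eqxx mul1r big1 ?addr0 // => y /negbTE.
by rewrite eq_sym => ->; rewrite mul0r.
Qed.

Section LinearIndependence.
Variables (K : fieldType) (T : Type).

Definition lin_indep (r : nat) (f : 'I_r -> T -> K) : Prop :=
  forall c : 'I_r -> K,
    (forall x, \sum_(z < r) c z * f z x = 0) -> forall z, c z = 0.

Definition eval_mx (k r : nat) (f : 'I_r -> T -> K) (a : 'I_k -> T) : 'M[K]_(k, r) :=
  \matrix_(i, z) f z (a i).

Definition coord (k r : nat) (a : 'I_k -> T) (B : 'I_r -> 'I_k -> K)
    (h : T -> K) (u : 'I_r) : K :=
  \sum_(i < k) B u i * h (a i).

Definition dual_basis (r k : nat) (f : 'I_r -> T -> K) (a : 'I_k -> T)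
    (B : 'I_r -> 'I_k -> K) : Prop :=
  forall y z, coord a B (f z) y = (y == z)%:R.

Lemma coord_sum (k r n : nat) (a : 'I_k -> T) (B : 'I_r -> 'I_k -> K)
    (h : T -> K) (m : 'I_n -> K) (g : 'I_n -> T -> K) :
  (forall x, h x = \sum_(w < n) m w * g w x) ->
  forall u, coord a B h u = \sum_(w < n) m w * coord a B (g w) u.
Proof.
move=> hE u; rewrite /coord; under eq_bigr do rewrite hE big_distrr /=.
rewrite exchange_big /=; apply: eq_bigr => w _; rewrite big_distrr /=.
by apply: eq_bigr => i _; rewrite mulrCA.
Qed.

Lemma dual_basis_coord (k r : nat) (g : 'I_r -> T -> K) (a : 'I_k -> T)
    (B : 'I_r -> 'I_k -> K) (h : T -> K) (m : 'I_r -> K) :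
  dual_basis g a B -> (forall x, h x = \sum_(w < r) m w * g w x) ->
  forall u, coord a B h u = m u.
Proof.
move=> gB hE u; rewrite (coord_sum a B hE).
by under eq_bigr do rewrite gB mulrC; exact: sum_delta_mull.
Qed.

Variables (r : nat) (f : 'I_r -> T -> K).
Hypothesis f_indep : lin_indep f.

Lemma lin_indep_coef_eq (c d : 'I_r -> K) :
  (forall x, \sum_(z < r) c z * f z x = \sum_(z < r) d z * f z x) -> c =1 d.
Proof.
move=> cdE z; apply/eqP; rewrite -subr_eq0; apply/eqP.
apply: (f_indep (c := fun z => c z - d z)) => x.
by under eq_bigr do rewrite mulrBl; rewrite sumrB cdE subrr.
Qed.

Lemma lin_indep_coef2_eq (c d : 'I_r -> 'I_r -> K) :
  (forall x y, \sum_(a < r) \sum_(b < r) c a b * f a x * f b y =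
               \sum_(a < r) \sum_(b < r) d a b * f a x * f b y) ->
  forall a b, c a b = d a b.
Proof.
move=> cdE a; apply: lin_indep_coef_eq => y; move: a.
apply: (lin_indep_coef_eq (c := fun a => \sum_(b < r) c a b * f b y)
  (d := fun a => \sum_(b < r) d a b * f b y)) => x.
have sumE (e : 'I_r -> 'I_r -> K) :
    \sum_(a < r) \sum_(b < r) e a b * f a x * f b y =
    \sum_(a < r) (\sum_(b < r) e a b * f b y) * f a x.
  by apply: eq_bigr => a _; rewrite big_distrl; apply: eq_bigr => b _; rewrite mulrAC.
by rewrite -!sumE cdE.
Qed.

Lemma lin_indep_inj : injective f.
Proof.
move=> z1 z2 f12.
have deltaE x : \sum_(z < r) (z1 == z)%:R * f z x = \sum_(z < r) (z2 == z)%:R * f z x.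
  by rewrite !sum_delta_mull f12.
have := lin_indep_coef_eq deltaE z1; rewrite eqxx.
by case: (z2 =P z1) => [->|_] // /eqP; rewrite mulr1n mulr0n oner_eq0.
Qed.

Lemma lin_indep_neq0 z : exists x, f z x != 0.
Proof.
apply/not_existsP => f0.
have /eqP : (z == z)%:R = 0 :> K.
  apply: (f_indep (c := fun y => (z == y)%:R)) => x.
  by rewrite sum_delta_mull; apply/eqP/negPn/negP/f0.
by rewrite eqxx mulr1n oner_eq0.
Qed.

Lemma eval_mx_row_full (k : nat) (a : 'I_k -> T) :
  (forall b, (\row_z f z b <= eval_mx f a)%MS) -> row_full (eval_mx f a).
Proof.
move=> rows_sub; rewrite -cokermx_eq0; apply/eqP/matrixP => z j; rewrite [RHS]mxE.
move: z; apply: (f_indep (c := fun z => cokermx (eval_mx f a) z j)) => b.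
have := rows_sub b; rewrite submxE => /eqP/matrixP/(_ 0 j); rewrite !mxE => rowE.
rewrite -[RHS]rowE; apply: eq_bigr => z _.
by rewrite mulrC; congr (_ * _); rewrite mxE.
Qed.

Lemma lin_indep_dual_basis :
  exists k (a : 'I_k -> T) (B : 'I_r -> 'I_k -> K), dual_basis f a B.
Proof.
suff [k [a /row_fullP[B BA]]] : exists k (a : 'I_k -> T), row_full (eval_mx f a).
  exists k, a, (fun y i => B y i) => y z.
  have /matrixP/(_ y z) := BA; rewrite !mxE => <-.
  by apply: eq_bigr => i _; rewrite mxE.
suff /(_ r (leqnn r))[k [a rank_a]] :
    forall n, (n <= r)%N -> exists k (a : 'I_k -> T), (n <= \rank (eval_mx f a))%N.
  by exists k, a; rewrite /row_full eqn_leq rank_leq_col.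
elim=> [|n IH] lt_n_r; first by exists 0%N, (ffun0 (card_ord 0)).
have [k [a le_n_a]] := IH (ltnW lt_n_r).
have [lt_n_a|le_a_n] := leqP n.+1 (\rank (eval_mx f a)); first by exists k, a.
have [b b_new] : exists b, ~~ (\row_z f z b <= eval_mx f a)%MS.
  apply/not_existsP => rows_sub.
  have /eqP rank_r : row_full (eval_mx f a).
    by apply: eval_mx_row_full => b; apply/negPn/negP; apply: rows_sub.
  by move: le_a_n; rewrite rank_r ltnS leqNgt lt_n_r.
pose a' (i : 'I_(k + 1)) := if fintype.split i is inl j then a j else b.
exists (k + 1)%N, a'.
have -> : eval_mx f a' = col_mx (eval_mx f a) (\row_z f z b).
  by apply/matrixP => i z; rewrite !mxE /a'; case: splitP => j _; rewrite !mxE.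
apply: leq_ltn_trans le_n_a (rank_ltmx _).
by rewrite ltmxE col_mx_sub submx_refl (negbTE b_new) -addsmxE addsmxSl.
Qed.

End LinearIndependence.

Section MomentMatching.
Variables (K : fieldType) (T : Type) (r s : nat).
Variables (f : 'I_r -> T -> K) (g : 'I_s -> T -> K) (p : 'I_r -> K) (q : 'I_s -> K).
Hypotheses (f_indep : lin_indep f) (g_indep : lin_indep g) (p_neq0 : forall z, p z != 0).
Hypothesis moment2 : forall x y,
  \sum_(z < r) p z * f z x * f z y = \sum_(w < s) q w * g w x * g w y.
Hypothesis moment3 : forall x y t,
  \sum_(z < r) p z * f z x * f z y * f z t = \sum_(w < s) q w * g w x * g w y * g w t.

Lemma moment2_span z : exists m : 'I_s -> K, forall y, f z y = \sum_(w < s) m w * g w y.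
Proof.
have [k [a [B fB]]] := lin_indep_dual_basis f_indep.
exists (fun w => q w * coord a B (g w) z / p z) => y.
have fE x : \sum_(w < s) q w * g w x * g w y = \sum_(z < r) (p z * f z y) * f z x.
  by rewrite -moment2; apply: eq_bigr => z' _; rewrite mulrAC.
have gE x : \sum_(w < s) q w * g w x * g w y = \sum_(w < s) (q w * g w y) * g w x.
  by apply: eq_bigr => w _; rewrite mulrAC.
have := dual_basis_coord fB fE z; rewrite (coord_sum a B gE) => pfE.
apply: (mulfI (p_neq0 z)); rewrite -pfE big_distrr /=.
by apply: eq_bigr => w _; rewrite mulrA [p z * _]mulrC divfK // mulrAC.
Qed.

Lemma moment3_coord_disjoint (k : nat) (a : 'I_k -> T) (B : 'I_s -> 'I_k -> K) :
  dual_basis g a B ->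
  forall z u v, u != v -> coord a B (f z) u * coord a B (f z) v = 0.
Proof.
move=> gB z u v uv; pose psi y w := coord a B (f y) w.
(* Contract moment3 with the dual basis of g: at coordinate u in x, then at v in y. *)
suff /(_ z)/eqP : forall y, p y * psi y u * psi y v = 0.
  by rewrite -mulrA mulf_eq0 (negbTE (p_neq0 z)) => /eqP.
apply: (f_indep (c := fun y => p y * psi y u * psi y v)) => t.
have coord_u y : \sum_(z < r) (p z * psi z u * f z t) * f z y =
                 \sum_(w < s) ((u == w)%:R * (q w * g w t)) * g w y.
  pose h x := \sum_(z < r) p z * f z x * f z y * f z t.
  have hf x : h x = \sum_(z < r) (p z * f z y * f z t) * f z x.
    by apply: eq_bigr => z' _; ring.
  have hg x : h x = \sum_(w < s) (q w * g w y * g w t) * g w x.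
    by rewrite /h moment3; apply: eq_bigr => w _; ring.
  transitivity (q u * g u y * g u t).
    rewrite -(dual_basis_coord gB hg u) (coord_sum a B hf).
    by apply: eq_bigr => z' _; rewrite /psi; ring.
  by under eq_bigr do rewrite -mulrA; rewrite sum_delta_mull; ring.
have := dual_basis_coord gB coord_u v; rewrite (coord_sum a B (fun y => erefl)).
rewrite (negbTE uv) mul0r => coord_v.
by rewrite -[RHS]coord_v; apply: eq_bigr => y _; rewrite /psi; ring.
Qed.

Lemma moment_match_scaled z : exists w (c : K), forall x, f z x = c * g w x.
Proof.
have [k [a [B gB]]] := lin_indep_dual_basis g_indep.
have [m fzE] := moment2_span z.
have coordE := dual_basis_coord gB fzE.
have [v mv] : exists v, m v != 0.
  apply/not_existsP => m0; have [x] := lin_indep_neq0 f_indep z.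
  rewrite fzE big1 ?eqxx // => w _.
  by move: (m0 w) => /negP/negPn/eqP ->; rewrite mul0r.
exists v, (m v) => x; rewrite fzE (bigD1 v) //= big1 ?addr0 // => u uv.
have /eqP := moment3_coord_disjoint gB z uv; rewrite !coordE mulf_eq0 (negbTE mv) orbF.
by move=> /eqP ->; rewrite mul0r.
Qed.
End MomentMatching.

Lemma sum_ffun_ordS (V : nmodType) (n : nat) (T : finType)
    (G : {ffun 'I_n.+1 -> T} -> V) :
  \sum_(z : {ffun 'I_n.+1 -> T}) G z =
  \sum_(t : T) \sum_(g : {ffun 'I_n -> T})
     G [ffun i => if unlift ord0 i is Some j then g j else t].
Proof.
rewrite pair_bigA /=.
apply: (reindex (fun tg : T * {ffun 'I_n -> T} =>
   [ffun i => if unlift ord0 i is Some j then tg.2 j else tg.1])).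
exists (fun z : {ffun 'I_n.+1 -> T} => (z ord0, [ffun j => z (lift ord0 j)])).
  move=> [t g] _ /=; rewrite ffunE unlift_none; congr pair.
  by apply/ffunP => j; rewrite !ffunE liftK.
move=> z _; apply/ffunP => i; rewrite ffunE /=.
by case: unliftP => [j|] ->; rewrite ?ffunE.
Qed.

Lemma sum_ffun_ord4 (V : nmodType) (T : finType) (G : T -> T -> T -> T -> V) :
  \sum_(z : {ffun 'I_4 -> T}) G (z ord0) (z (lift ord0 ord0))
    (z (lift ord0 (lift ord0 ord0))) (z (lift ord0 (lift ord0 (lift ord0 ord0)))) =
  \sum_(a : T) \sum_(b : T) \sum_(c : T) \sum_(d : T) G a b c d.
Proof.
rewrite sum_ffun_ordS; apply: eq_bigr => a _.
rewrite sum_ffun_ordS; apply: eq_bigr => b _.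
rewrite sum_ffun_ordS; apply: eq_bigr => c _.
rewrite sum_ffun_ordS; apply: eq_bigr => d _.
rewrite (eq_bigr (fun _ => G a b c d)); last first.
  by move=> g _; do 5!(rewrite ?ffunE ?liftK ?unlift_none /=).
by rewrite sumr_const card_ffun card_ord expn0 mulr1n.
Qed.

Section RealLimits.
Variable R : realType.

Lemma cvg_sum (T : Type) (G : set_system T) {FG : Filter G} (n : nat)
    (h : 'I_n -> T -> R) (l : 'I_n -> R) :
  (forall i, h i @ G --> l i) -> (fun t => \sum_(i < n) h i t) @ G --> \sum_(i < n) l i.
Proof. by move=> hl; apply: cvg_big => //; exact: add_continuous. Qed.

Lemma cvg_sum_mulr1 (T : Type) (G : set_system T) {FG : Filter G} (n : nat)
    (h : 'I_n -> R) (f : 'I_n -> T -> R) :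
  (forall i, f i @ G --> (1 : R)) ->
  (fun t => \sum_(i < n) h i * f i t) @ G --> \sum_(i < n) h i.
Proof.
move=> f1; rewrite -[X in _ --> X](eq_bigr _ (fun i _ => mulr1 (h i))).
by apply: cvg_sum => i; apply: cvgMl_tmp; exact: f1.
Qed.

Lemma cvgy_eq_unique (f g : R -> R) (l1 l2 : R) :
  f @ +oo --> l1 -> g @ +oo --> l2 -> f =1 g -> l1 = l2.
Proof. by move=> fl1 gl2 /funext fg; rewrite fg in fl1; exact: cvg_unique _ fl1 gl2. Qed.

End RealLimits.

Section FourNodeGraphs.
Variable R : realType.

(* Only the entries with i < j are read by edge_joint_cdf. *)
Definition four_node_thresholds (x01 x02 x03 x12 x13 x23 : R) (i j : 'I_4) : R :=
  match nat_of_ord i, nat_of_ord j with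
  | 0, 1 => x01 | 0, 2 => x02 | 0, 3 => x03 | 1, 2 => x12 | 1, 3 => x13 | _, _ => x23
  end%N.

Definition four_node_sum (r : nat) (p : 'I_r -> R)
    (A01 A02 A03 A12 A13 A23 : 'I_r -> 'I_r -> R) : R :=
  \sum_(a < r) \sum_(b < r) \sum_(c < r) \sum_(d < r)
    p a * p b * p c * p d *
    (A01 a b * A02 a c * A03 a d * A12 b c * A13 b d * A23 c d).

Lemma edge_joint_cdf_four_nodes (r : nat) (p : 'I_r -> R) (F : 'I_r -> 'I_r -> R -> R)
    (x01 x02 x03 x12 x13 x23 : R) :
  edge_joint_cdf p F (four_node_thresholds x01 x02 x03 x12 x13 x23) =
  four_node_sum p (fun a b => F a b x01) (fun a b => F a b x02) (fun a b => F a b x03)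
    (fun a b => F a b x12) (fun a b => F a b x13) (fun a b => F a b x23).
Proof.
rewrite /edge_joint_cdf /four_node_sum -(sum_ffun_ord4 (fun a b c d =>
  p a * p b * p c * p d *
  (F a b x01 * F a c x02 * F a d x03 * F b c x12 * F b d x13 * F c d x23))).
apply: eq_bigr => z _; under [X in _ * X]eq_bigr do rewrite big_mkcond.
by rewrite !big_ord_recl !big_ord0 /=; ring.
Qed.

Lemma cvg_four_node_sum (T : Type) (G : set_system T) {FG : Filter G}
    (r : nat) (p : 'I_r -> R) (A01 A02 A03 A12 A13 A23 : T -> 'I_r -> 'I_r -> R)
    (L01 L02 L03 L12 L13 L23 : 'I_r -> 'I_r -> R) :
  (forall a b, A01 ^~ a ^~ b @ G --> L01 a b) ->
  (forall a b, A02 ^~ a ^~ b @ G --> L02 a b) ->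
  (forall a b, A03 ^~ a ^~ b @ G --> L03 a b) ->
  (forall a b, A12 ^~ a ^~ b @ G --> L12 a b) ->
  (forall a b, A13 ^~ a ^~ b @ G --> L13 a b) ->
  (forall a b, A23 ^~ a ^~ b @ G --> L23 a b) ->
  four_node_sum p (A01 t) (A02 t) (A03 t) (A12 t) (A13 t) (A23 t) @[t --> G] -->
  four_node_sum p L01 L02 L03 L12 L13 L23.
Proof.
move=> A01L A02L A03L A12L A13L A23L.
do 4![apply: cvg_sum => ?]; apply: cvgMl_tmp.
by do ![apply: cvgM].
Qed.

Lemma four_node_sum_star (r : nat) (p : 'I_r -> R) (A01 A02 A03 : 'I_r -> 'I_r -> R) :
  four_node_sum p A01 A02 A03 (fun _ _ => 1) (fun _ _ => 1) (fun _ _ => 1) =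
  \sum_(a < r) p a * (\sum_(b < r) A01 a b * p b) * (\sum_(c < r) A02 a c * p c)
                   * (\sum_(d < r) A03 a d * p d).
Proof.
apply: eq_bigr => a _; transitivity (\sum_(b < r) \sum_(c < r) \sum_(d < r)
  p a * (A01 a b * p b) * (A02 a c * p c) * (A03 a d * p d)).
  by do 3!(apply: eq_bigr => ? _); ring.
under eq_bigr do under eq_bigr do rewrite -mulr_sumr.
under eq_bigr do rewrite -mulr_suml -mulr_sumr.
by rewrite -!mulr_suml -mulr_sumr.
Qed.

Lemma four_node_sum_path (r : nat) (p : 'I_r -> R) (A01 A02 A13 : 'I_r -> 'I_r -> R) :
  four_node_sum p A01 A02 (fun _ _ => 1) (fun _ _ => 1) A13 (fun _ _ => 1) =
  \sum_(a < r) \sum_(b < r) p a * p b * A01 a b * (\sum_(c < r) A02 a c * p c)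
                   * (\sum_(d < r) A13 b d * p d).
Proof.
apply: eq_bigr => a _; apply: eq_bigr => b _; transitivity (\sum_(c < r) \sum_(d < r)
  p a * p b * A01 a b * (A02 a c * p c) * (A13 b d * p d)).
  by do 2!(apply: eq_bigr => ? _); ring.
under eq_bigr do rewrite -mulr_sumr.
by rewrite -mulr_suml -mulr_sumr.
Qed.
End FourNodeGraphs.

Section WsbmLimits.
Variables (R : realType) (r : nat) (p : 'I_r -> R) (F : 'I_r -> 'I_r -> R -> R).
Hypothesis wsbm_pF : wsbm p F.

Lemma wsbm_weight_neq0 z : p z != 0.
Proof. by have [p_gt0 _] := wsbm_pF; rewrite lt0r_neq0. Qed.

Lemma wsbm_cdf_cvgy z1 z2 : F z1 z2 @ +oo --> (1 : R).
Proof. by have [_ [_ [cdfF _]]] := wsbm_pF; have [_ [_ []]] := cdfF z1 z2. Qed.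

Lemma marg_cdf_cvgy z : marg_cdf p F z @ +oo --> (1 : R).
Proof.
have [_ [sum_p1 _]] := wsbm_pF.
suff : marg_cdf p F z @ +oo --> \sum_(z' < r) 1 * p z'.
  by rewrite (eq_bigr p) ?sum_p1 // => z' _; rewrite mul1r.
rewrite /marg_cdf; apply: cvg_sum => z'; apply: cvgMr_tmp; exact: wsbm_cdf_cvgy.
Qed.

Lemma cvg_third_moment x y u :
  edge_joint_cdf p F (four_node_thresholds x y u t t t) @[t --> +oo] -->
  \sum_(z < r) p z * marg_cdf p F z x * marg_cdf p F z y * marg_cdf p F z u.
Proof.
under eq_cvg do rewrite edge_joint_cdf_four_nodes.
have -> : \sum_(z < r) p z * marg_cdf p F z x * marg_cdf p F z y * marg_cdf p F z u =
  four_node_sum p (fun a b => F a b x) (fun a b => F a b y) (fun a b => F a b u)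
    (fun _ _ => 1) (fun _ _ => 1) (fun _ _ => 1) by rewrite four_node_sum_star.
by apply: cvg_four_node_sum => a b; first [exact: cvg_cst | exact: wsbm_cdf_cvgy].
Qed.

Lemma cvg_edge_moment e x y :
  edge_joint_cdf p F (four_node_thresholds e x t t y t) @[t --> +oo] -->
  \sum_(a < r) \sum_(b < r)
    p a * p b * F a b e * marg_cdf p F a x * marg_cdf p F b y.
Proof.
under eq_cvg do rewrite edge_joint_cdf_four_nodes.
have -> : \sum_(a < r) \sum_(b < r)
    p a * p b * F a b e * marg_cdf p F a x * marg_cdf p F b y =
  four_node_sum p (fun a b => F a b e) (fun a b => F a b x) (fun _ _ => 1)
    (fun _ _ => 1) (fun a b => F a b y) (fun _ _ => 1) by rewrite four_node_sum_path.
by apply: cvg_four_node_sum => a b; first [exact: cvg_cst | exact: wsbm_cdf_cvgy].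
Qed.
End WsbmLimits.
Arguments cvg_third_moment {R r p F} wsbm_pF x y u.
Arguments cvg_edge_moment {R r p F} wsbm_pF e x y.

Section Identification.
Variables (R : realType) (r : nat) (p : 'I_r -> R) (F : 'I_r -> 'I_r -> R -> R).
Variables (r' : nat) (p' : 'I_r' -> R) (F' : 'I_r' -> 'I_r' -> R -> R).
Hypotheses (wsbm_pF : wsbm p F) (wsbm_pF' : wsbm p' F').
Hypotheses (indep_pF : marg_lin_indep p F) (indep_pF' : marg_lin_indep p' F').
Hypothesis same_cdf : forall (n : nat) (x : 'I_n -> 'I_n -> R),
  edge_joint_cdf p F x = edge_joint_cdf p' F' x.

Lemma third_moment_eq x y u :
  \sum_(z < r) p z * marg_cdf p F z x * marg_cdf p F z y * marg_cdf p F z u =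
  \sum_(w < r') p' w * marg_cdf p' F' w x * marg_cdf p' F' w y * marg_cdf p' F' w u.
Proof.
apply/(cvgy_eq_unique (cvg_third_moment wsbm_pF x y u) (cvg_third_moment wsbm_pF' x y u)).
by move=> t; apply: same_cdf.
Qed.

Lemma second_moment_eq x y :
  \sum_(z < r) p z * marg_cdf p F z x * marg_cdf p F z y =
  \sum_(w < r') p' w * marg_cdf p' F' w x * marg_cdf p' F' w y.
Proof.
apply/(cvgy_eq_unique (cvg_sum_mulr1 (marg_cdf_cvgy wsbm_pF))
        (cvg_sum_mulr1 (marg_cdf_cvgy wsbm_pF'))) => t.
exact: third_moment_eq.
Qed.

Lemma first_moment_eq x :
  \sum_(z < r) p z * marg_cdf p F z x = \sum_(w < r') p' w * marg_cdf p' F' w x.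
Proof.
apply/(cvgy_eq_unique (cvg_sum_mulr1 (marg_cdf_cvgy wsbm_pF))
        (cvg_sum_mulr1 (marg_cdf_cvgy wsbm_pF'))) => t.
exact: second_moment_eq.
Qed.

Lemma edge_moment_eq e x y :
  \sum_(a < r) \sum_(b < r) p a * p b * F a b e * marg_cdf p F a x * marg_cdf p F b y =
  \sum_(a < r') \sum_(b < r')
    p' a * p' b * F' a b e * marg_cdf p' F' a x * marg_cdf p' F' b y.
Proof.
apply/(cvgy_eq_unique (cvg_edge_moment wsbm_pF e x y) (cvg_edge_moment wsbm_pF' e x y)).
by move=> t; apply: same_cdf.
Qed.

Lemma marg_cdf_match :
  exists sigma : 'I_r -> 'I_r', forall z, marg_cdf p' F' (sigma z) = marg_cdf p F z.
Proof.
suff /choice[sigma sigmaE] : forall z, exists w, marg_cdf p' F' w = marg_cdf p F z.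
  by exists sigma.
move=> z.
have [w [c fE]] := moment_match_scaled indep_pF indep_pF' (wsbm_weight_neq0 wsbm_pF)
  second_moment_eq third_moment_eq z.
have c1 : c = 1.
  have cg_cvg : (fun x => c * marg_cdf p' F' w x) @ +oo --> c * 1.
    by apply: cvgMl_tmp; exact: marg_cdf_cvgy.
  rewrite -[c]mulr1; apply/(cvgy_eq_unique cg_cvg (marg_cdf_cvgy wsbm_pF z)) => x.
  by rewrite fE.
by exists w; apply/funext => x; rewrite fE c1 mul1r.
Qed.

Section Relabeling.
Variable sigma : 'I_r -> 'I_r'.
Hypothesis sigma_bij : bijective sigma.
Hypothesis sigmaE : forall z, marg_cdf p' F' (sigma z) = marg_cdf p F z.

Lemma sum_relabel (h : 'I_r' -> R) : \sum_(w < r') h w = \sum_(z < r) h (sigma z).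
Proof. exact: reindex (onW_bij _ sigma_bij). Qed.

Lemma weight_relabel z : p' (sigma z) = p z.
Proof.
move: z; apply: (lin_indep_coef_eq indep_pF) => x.
by rewrite first_moment_eq sum_relabel; under [RHS]eq_bigr do rewrite sigmaE.
Qed.

Lemma edge_cdf_relabel a b : F' (sigma a) (sigma b) = F a b.
Proof.
apply/funext => e; have p_neq0 := wsbm_weight_neq0 wsbm_pF.
apply: (mulfI (mulf_neq0 (p_neq0 a) (p_neq0 b))).
move: a b; apply: (lin_indep_coef2_eq indep_pF) => x y.
rewrite edge_moment_eq sum_relabel.
under [RHS]eq_bigr do rewrite sum_relabel.
by under [RHS]eq_bigr do under eq_bigr do rewrite !sigmaE !weight_relabel.
Qed.
End Relabeling.
End Identification.

Unset Implicit Arguments.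

Theorem proposition1 (R : realType)
    (r : nat) (p : 'I_r -> R) (F : 'I_r -> 'I_r -> R -> R)
    (r' : nat) (p' : 'I_r' -> R) (F' : 'I_r' -> 'I_r' -> R -> R) :
  wsbm p F -> marg_lin_indep p F ->
  wsbm p' F' -> marg_lin_indep p' F' ->
  (forall (n : nat) (x : 'I_n -> 'I_n -> R),
      edge_joint_cdf p F x = edge_joint_cdf p' F' x) ->
  r = r' /\
  exists sigma : 'I_r -> 'I_r',
    bijective sigma /\
    (forall z, p' (sigma z) = p z) /\
    (forall z1 z2, F' (sigma z1) (sigma z2) = F z1 z2).
Proof.
move=> wsbm_pF indep_pF wsbm_pF' indep_pF' same_cdf.
have [sigma sigmaE] := marg_cdf_match wsbm_pF wsbm_pF' indep_pF indep_pF' same_cdf.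
have [tau tauE] := marg_cdf_match wsbm_pF' wsbm_pF indep_pF' indep_pF
  (fun n x => esym (same_cdf n x)).
have sigma_inj : injective sigma.
  by move=> z1 z2 /(congr1 (marg_cdf p' F')); rewrite !sigmaE; apply: lin_indep_inj.
have tau_inj : injective tau.
  by move=> w1 w2 /(congr1 (marg_cdf p F)); rewrite !tauE; apply: lin_indep_inj.
have r_eq : r = r'.
  have := leq_card _ sigma_inj; have := leq_card _ tau_inj; rewrite !card_ord.
  by move=> le_r'r le_rr'; apply/eqP; rewrite eqn_leq le_rr' le_r'r.
have sigma_bij : bijective sigma by apply: (inj_card_bij sigma_inj); rewrite !card_ord r_eq.
split=> //; exists sigma; split=> //; split.
- exact: (weight_relabel wsbm_pF wsbm_pF' indep_pF same_cdf sigma_bij sigmaE).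
- exact: (edge_cdf_relabel wsbm_pF wsbm_pF' indep_pF same_cdf sigma_bij sigmaE).
Qed.
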